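(* If $\lambda\in C_4\cup C_5\cup C_7$, then $t_{\mathrm{cut}}(\lambda)=t^1_{\mathrm{conj}}(\lambda)=t^1_{\mathrm{MAX}}(\lambda)=+\infty$.
   Context: Let $G=\mathbb R^5$ with coordinates $(x,y,z,v,w)$ (the Cartan group, identity $0$), vector fields $X_1=\partial_x-\frac y2\partial_z-\frac{x^2+y^2}{2}\partial_w$, $X_2=\partial_y+\frac x2\partial_z+\frac{x^2+y^2}{2}\partial_v$; sub-Riemannian problem $\dot g=u_1X_1+u_2X_2$, fixed endpoints, minimize $\int\sqrt{u_1^2+u_2^2}\,dt$. For $\lambda=(\theta,c,\alpha,\beta)$, $\theta,\beta\in S^1$, $c\in\mathbb R$, $\alpha\ge0$: $\mathrm{Exp}(\lambda,t)=g(t)$ with $g(0)=0$, $\dot g=\cos\theta(t)X_1+\sin\theta(t)X_2$, $\dot\theta=c$, $\dot c=-\alpha\sin(\theta-\beta)$, $(\theta(0),c(0))=(\theta,c)$. $E=\frac{c^2}2-\alpha\cos(\theta-\beta)$; $C_4=\{\alpha>0,E=-\alpha\}$, $C_5=\{\alpha>0,E=\alpha,\theta-\beta=\pi\}$, $C_7=\{\alpha=c=0\}$. $t_{\mathrm{cut}}(\lambda)=\sup\{t>0:\mathrm{Exp}(\lambda,\cdot)|_{[0,t]}\text{ is length minimizing}\}$; $t^1_{\mathrm{conj}}(\lambda)=\sup\{t>0:\mathrm{Exp}(\lambda,\cdot)|_{[0,t]}\text{ is locally optimal}\}$ (minimizing among admissible curves with same endpoints in a $C([0,t],G)$-neighborhood).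 The first Maxwell time $t^1_{\mathrm{MAX}}$ is defined to be $+\infty$ on $C_3\cup C_4\cup C_5\cup C_7$ (where $C_3=\{\alpha>0,E=\alpha,\theta-\beta\neq\pi\}$). *)

From HB Require Import structures.
From mathcomp Require Import all_boot all_order all_algebra.
From mathcomp Require Import all_classical all_reals all_analysis.
Set Implicit Arguments. Unset Strict Implicit. Unset Printing Implicit Defensive.
Import Order.TTheory GRing.Theory Num.Theory.
Import numFieldNormedType.Exports.
Local Open Scope classical_set_scope.
Local Open Scope ring_scope.

Section Cartan.
Variable R : realType.

(* A point (x,y,z,v,w) of the Cartan group G = R^5; identity = origin. *)
Record pt := Pt { px : R; py : R; pz : R; pv : R; pw : R }.

Definition origin : pt := Pt 0 0 0 0 0.

(* u1 X1 + u2 X2 evaluated at p, with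
   X1 = d_x - y/2 d_z - (x^2+y^2)/2 d_w,
   X2 = d_y + x/2 d_z + (x^2+y^2)/2 d_v. *)
Definition field (p : pt) (u1 u2 : R) : pt :=
  Pt u1 u2
     (- (py p / 2) * u1 + (px p / 2) * u2)
     (((px p) ^+ 2 + (py p) ^+ 2) / 2 * u2)
     (- (((px p) ^+ 2 + (py p) ^+ 2) / 2) * u1).

Definition coords : seq (pt -> R) := [:: px; py; pz; pv; pw].

Definition leb := (@lebesgue_measure R).

(* Admissible curve on [0,T]: controls u1,u2 in L^infinity([0,T])
   (measurable and bounded), and g a (Caratheodory) solution of
   g' = u1 X1(g) + u2 X2(g), written in integral form. *)
Definition admissible (T : R) (u1 u2 : R -> R) (g : R -> pt) : Prop :=
  [/\ 0 <= T,
      measurable_fun `[0, T] u1,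
      measurable_fun `[0, T] u2,
      (exists M : R, forall s, s \in `[0, T] -> `|u1 s| <= M /\ `|u2 s| <= M) &
      forall c, c \in coords ->
        leb.-integrable `[0, T]
           (fun s => (c (field (g s) (u1 s) (u2 s)))%:E) /\
        forall t, t \in `[0, T] ->
          c (g t) = c (g 0) + Rintegral leb `[0, t]
                                (fun s => c (field (g s) (u1 s) (u2 s)))].

Definition sr_length (T : R) (u1 u2 : R -> R) : R :=
  Rintegral leb `[0, T] (fun s => Num.sqrt (u1 s ^+ 2 + u2 s ^+ 2)).

(* Exp(lambda,.) : th, cc are theta(t), c(t); g(t) the geodesic. *)
Definition is_Exp (th0 c0 al be : R) (th cc : R -> R) (g : R -> pt) : Prop :=
  [/\ [/\ th 0 = th0, cc 0 = c0 & g 0 = origin],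
      (forall t : R, is_derive t (1 : R) th (cc t)),
      (forall t : R, is_derive t (1 : R) cc (- al * sin (th t - be))) &
      forall (t : R) c, c \in coords ->
        is_derive t (1 : R) (fun s => c (g s)) (c (field (g t) (cos (th t)) (sin (th t))))].

Definition minimizing (th : R -> R) (g : R -> pt) (t : R) : Prop :=
  forall T v1 v2 h, admissible T v1 v2 h -> h 0 = g 0 -> h T = g t ->
    sr_length t (fun s => cos (th s)) (fun s => sin (th s)) <= sr_length T v1 v2.

(* uniform (C([0,t],G)) distance via the max-norm on R^5 *)
Definition ptdist (p q : pt) : R :=
  Num.max `|px p - px q| (Num.max `|py p - py q|
    (Num.max `|pz p - pz q| (Num.max `|pv p - pv q| `|pw p - pw q|))).

Definition locally_optimal (th : R -> R) (g : R -> pt) (t : R) : Prop :=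
  exists2 eps : R, 0 < eps &
    forall v1 v2 h, admissible t v1 v2 h -> h 0 = g 0 -> h t = g t ->
      (forall s, s \in `[0, t] -> ptdist (h s) (g s) < eps) ->
      sr_length t (fun s => cos (th s)) (fun s => sin (th s)) <= sr_length t v1 v2.

Definition t_cut (th : R -> R) (g : R -> pt) : \bar R :=
  ereal_sup [set (t%:E)%E | t in [set t : R | 0 < t /\ minimizing th g t]].

Definition t1_conj (th : R -> R) (g : R -> pt) : \bar R :=
  ereal_sup [set (t%:E)%E | t in [set t : R | 0 < t /\ locally_optimal th g t]].

(* equality on S^1 = R / 2piZ *)
Definition eq_S1 (a b : R) : Prop := exists k : int, a = b + k%:~R * (2 * pi).

Definition energy (th c al be : R) : R := c ^+ 2 / 2 - al * cos (th - be).

Definition in_C3 (th c al be : R) : Prop :=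
  0 < al /\ energy th c al be = al /\ ~ eq_S1 (th - be) pi.
Definition in_C4 (th c al be : R) : Prop :=
  0 < al /\ energy th c al be = - al.
Definition in_C5 (th c al be : R) : Prop :=
  0 < al /\ energy th c al be = al /\ eq_S1 (th - be) pi.
Definition in_C7 (th c al be : R) : Prop :=
  al = 0 /\ c = 0.

End Cartan.

From HB Require Import structures.
From mathcomp Require Import all_boot all_order all_algebra.
From mathcomp Require Import all_classical all_reals all_analysis.
From mathcomp Require Import measurable_realfun.
From mathcomp Require Import ring lra.
Import Order.TTheory GRing.Theory Num.Theory.
Import numFieldNormedType.Exports.
Local Open Scope classical_set_scope.
Local Open Scope ring_scope.

(* For lambda in C4, C5 or C7 the pendulum (theta, c) stays at rest for t >= 0.
   In C4 this is forced by conservation of the energy E = c^2/2 - alpha cos (theta - beta),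
   and in C7 by c' = 0.  In C5 (the unstable equilibrium theta - beta = pi with E = alpha)
   the energy level also contains the separatrix, and rest follows from Gronwall's
   inequality for V = 1 + cos (theta - beta), which satisfies V(0) = 0 and V' <= (1 + alpha) V.
   Hence theta is constant and the geodesic is the straight horizontal line
   (x, y) = t (cos theta0, sin theta0) of length t.  For any admissible curve with the
   same endpoints, Cauchy-Schwarz gives
   length >= int (cos theta0 u1 + sin theta0 u2) = cos theta0 x(T) + sin theta0 y(T) = t,
   so the geodesic minimizes on every [0, t] and t_cut = t1_conj = +oo. *)

Lemma periodicz (U V : zmodType) (f : U -> V) (T : U) :
  periodic f T -> forall (k : int) a, f (a + T *~ k) = f a.
Proof.
move=> fT [] n a; first exact: periodicn.
by rewrite NegzE mulrNz -[in RHS](subrK (T *+ n.+1) a) periodicn.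
Qed.

Lemma eq_S1_pi_cos (R : realType) (x : R) : eq_S1 x pi -> cos x = -1.
Proof.
by case=> k ->; rewrite mulrzl mulr_natl periodicz ?cospi //; apply: cosD2pi.
Qed.

Section Calculus.
Variable R : realType.
Implicit Types (f df : R -> R) (a b k t x : R).

Lemma deriv_le0_nonincreasing f df a :
  (forall x, is_derive x 1 f (df x)) -> (forall x, a < x -> df x <= 0) ->
  forall t, a <= t -> f t <= f a.
Proof.
move=> fdf df_le0 t; rewrite le_eqVlt => /orP[/eqP <- // | at_].
rewrite -subr_le0.
have [c /[!in_itv] /= /andP[ac _] ->] := MVT at_ (fun x _ => fdf x)
  (derivable_within_continuous (fun x _ => @ex_derive _ _ _ _ _ _ _ (fdf x))).
by rewrite mulr_le0_ge0 ?df_le0 // subr_ge0 ltW.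
Qed.

Lemma deriv_eq0_constant f df a :
  (forall x, is_derive x 1 f (df x)) -> (forall x, a < x -> df x = 0) ->
  forall t, a <= t -> f t = f a.
Proof.
move=> fdf df0 t at_; apply/eqP; rewrite eq_le.
rewrite (deriv_le0_nonincreasing _ _ _ fdf) ?andbT //; last by move=> x /df0 ->.
rewrite -lerN2 (deriv_le0_nonincreasing (- f) (- df)) // => x /df0 dfx0.
by rewrite fctE dfx0 oppr0.
Qed.

Lemma is_derive_mulr k x : is_derive x (1 : R) ( *%R k) k.
Proof.
by have := is_deriveZ k (is_derive_id x 1); rewrite /GRing.scale /= mulr1.
Qed.

Lemma deriv_const_linear f df k a :
  (forall x, is_derive x 1 f (df x)) -> (forall x, a < x -> df x = k) ->
  forall t, a <= t -> f t = f a + k * (t - a).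
Proof.
move=> fdf dfk t at_.
have fBlin x : is_derive x 1 (fun s => f s - k * s) (df x - k).
  exact: is_deriveB (fdf x) (is_derive_mulr k x).
have /(_ t at_) : forall s, a <= s -> f s - k * s = f a - k * a.
  by apply: (deriv_eq0_constant _ _ _ fBlin) => x /dfk ->; rewrite subrr.
by move=> fBt; rewrite -[f t](subrK (k * t)) fBt; ring.
Qed.

Lemma is_derive_cos_subr f x d b :
  is_derive x 1 f d -> is_derive x 1 (fun s => cos (f s - b)) (- sin (f x - b) * d).
Proof.
move=> fd; have fbd : is_derive x 1 (fun s => f s - b) d.
  by have := is_deriveB fd (is_derive_cst b x 1); rewrite subr0.
exact: is_derive1_comp.
Qed.

Lemma is_derive_sqr f x d :
  is_derive x 1 f d -> is_derive x 1 (fun s => f s ^+ 2) (2 * f x * d).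
Proof.
move=> fd; apply: is_derive_eq (is_deriveX 2 fd) _.
by rewrite expr1 /GRing.scale /=; ring.
Qed.

Lemma gronwall_zero (V dV : R -> R) (K a : R) :
  (forall x, is_derive x 1 V (dV x)) -> (forall x, a < x -> dV x <= K * V x) ->
  (forall t, a <= t -> 0 <= V t) -> V a = 0 -> forall t, a <= t -> V t = 0.
Proof.
move=> dVx dV_le V_ge0 Va0 t at_.
pose X s := expR (- K * s).
have dX x : is_derive x 1 X (expR (- K * x) * - K).
  exact: is_derive1_comp (is_derive_expR _) (is_derive_mulr (- K) x).
have : (V * X) t <= (V * X) a.
  apply: (deriv_le0_nonincreasing _ _ _ (fun x => is_deriveM (dVx x) (dX x))) => //.
  move=> x ax; rewrite /GRing.scale /= /X.
  have := expR_gt0 (- K * x); have := dV_le x ax; nra.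
rewrite !fctE Va0 mul0r => VXt_le0.
apply/eqP; rewrite eq_le V_ge0 // andbT.
by rewrite -(pmulr_lle0 _ (expR_gt0 (- K * t))).
Qed.

End Calculus.

Arguments deriv_eq0_constant {R f df} a.
Arguments deriv_const_linear {R f df} k a.
Arguments is_derive_cos_subr {R f x d} b.
Arguments is_derive_sqr {R f x d}.
Arguments gronwall_zero {R V dV} K a.

Section Pendulum.
Context {R : realType} {al be : R} {th cc : R -> R}.
Hypothesis dth : forall t : R, is_derive t 1 th (cc t).
Hypothesis dcc : forall t : R, is_derive t 1 cc (- al * sin (th t - be)).

Lemma pendulum_energy_constant t : 0 <= t ->
  energy (th t) (cc t) al be = energy (th 0) (cc 0) al be.
Proof.
apply: (deriv_eq0_constant 0 (f := fun s => energy (th s) (cc s) al be)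
  (df := fun=> 0)) => // x.
have -> : (fun s => energy (th s) (cc s) al be)
    = 2^-1 *: (fun s => cc s ^+ 2) - al *: (fun s => cos (th s - be)).
  by apply/funext => s; rewrite /energy /= mulrC.
apply: is_derive_eq
  (is_deriveB (is_deriveZ (2^-1) (is_derive_sqr (dcc x)))
              (is_deriveZ al (is_derive_cos_subr be (dth x)))) _.
by rewrite /GRing.scale /= !mulrA mulVf // mul1r; ring.
Qed.

Lemma pendulum_C4_rest : 0 <= al -> energy (th 0) (cc 0) al be = - al ->
  forall t, 0 <= t -> cc t = 0.
Proof.
move=> al_ge0 E0 t t0; have := pendulum_energy_constant t t0.
rewrite E0 /energy => Et.
have cos_gap : 0 <= al * (1 - cos (th t - be)).
  by rewrite mulr_ge0 ?subr_ge0 ?cos_le1.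
by apply/eqP; rewrite -sqrf_eq0 eq_le sqr_ge0 andbT; nra.
Qed.

Lemma pendulum_C5_rest : cos (th 0 - be) = -1 ->
  energy (th 0) (cc 0) al be = al -> forall t, 0 <= t -> cc t = 0.
Proof.
move=> cos0 E0.
pose V s := cos (th s - be) + 1.
have V_ge0 s : 0 <= V s by rewrite /V -lerBlDr sub0r cos_geN1.
have ccV (t : R) : 0 <= t -> cc t ^+ 2 = 2 * al * V t.
  by move=> t0; have := pendulum_energy_constant t t0; rewrite E0 /energy /V; lra.
have dV (x : R) : is_derive x 1 V (- sin (th x - be) * cc x).
  have := is_deriveD (is_derive_cos_subr be (dth x)) (is_derive_cst (1 : R) x 1).
  by rewrite addr0.
have V0 (t : R) : 0 <= t -> V t = 0.
  apply: (gronwall_zero (1 + al) 0 dV) => [x x0 | s _ | ]; last by rewrite /V cos0 addNr.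
  (* -sin c <= (sin^2 + c^2)/2, with sin^2 = (1 - cos) V <= 2 V and c^2 = 2 alpha V *)
  - have := ccV x (ltW x0); have := cos2Dsin2 (th x - be).
    have := V_ge0 x; have := sqr_ge0 (sin (th x - be) + cc x); rewrite /V; nra.
  - exact: V_ge0.
by move=> t t0; apply/eqP; rewrite -sqrf_eq0 ccV // V0 // mulr0.
Qed.

Lemma pendulum_C7_rest : al = 0 -> cc 0 = 0 -> forall t, 0 <= t -> cc t = 0.
Proof.
move=> al0 cc0 t t0; rewrite -cc0; apply: (deriv_eq0_constant 0 dcc) => // x _.
by rewrite al0 oppr0 mul0r.
Qed.

End Pendulum.

Lemma ler_unit_dot_sqrt (R : rcfType) (a b x y : R) :
  a ^+ 2 + b ^+ 2 = 1 -> a * x + b * y <= Num.sqrt (x ^+ 2 + y ^+ 2).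
Proof.
move=> ab1; apply: (le_trans (ler_norm _)); rewrite -sqrtr_sqr ler_wsqrtr //.
rewrite -[x ^+ 2 + _]mul1r -ab1.
have := sqr_ge0 (a * y - b * x); nra.
Qed.

Section DotIntegral.
Context {d : measure_display} {T : measurableType d} {R : realType}.
Context (mu : {measure set T -> \bar R}) {D : set T} (v1 v2 : T -> R).
Hypothesis mD : measurable D.
Hypotheses (i1 : mu.-integrable D (EFin \o v1)) (i2 : mu.-integrable D (EFin \o v2)).

Lemma integrable_sqrt_sum_sqr :
  mu.-integrable D (EFin \o fun s => Num.sqrt (v1 s ^+ 2 + v2 s ^+ 2)).
Proof.
have i12 : mu.-integrable D (EFin \o fun s => `|v1 s| + `|v2 s|).
  by apply: eq_integrable (integrableD mD (integrable_abse i1) (integrable_abse i2)).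
apply: (le_integrable mD _ _ i12).
  apply/measurable_EFinP.
  apply: (measurableT_comp (continuous_measurable_fun (@sqrt_continuous R))).
  by apply: measurable_funD; apply: measurable_funX; apply/measurable_EFinP;
    [exact: (measurable_int mu i1) | exact: (measurable_int mu i2)].
move=> x _ /=; rewrite lee_fin ger0_norm ?sqrtr_ge0 // -sqrtr_sqr ler_wsqrtr //.
rewrite -(real_normK (num_real (v1 x))) -(real_normK (num_real (v2 x))).
have := normr_ge0 (v1 x); have := normr_ge0 (v2 x); nra.
Qed.

Lemma dot_Rintegral_le_sqrt (a b : R) : a ^+ 2 + b ^+ 2 = 1 ->
  a * Rintegral mu D v1 + b * Rintegral mu D v2
    <= Rintegral mu D (fun s => Num.sqrt (v1 s ^+ 2 + v2 s ^+ 2)).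
Proof.
move=> ab1.
have ia : mu.-integrable D (EFin \o fun s => a * v1 s).
  by apply: eq_integrable (integrableZl mD a i1).
have ib : mu.-integrable D (EFin \o fun s => b * v2 s).
  by apply: eq_integrable (integrableZl mD b i2).
rewrite -(RintegralZl a mD i1) -(RintegralZl b mD i2) -(RintegralD mD ia ib).
apply: le_Rintegral integrable_sqrt_sum_sqr _ => //.
  by apply: eq_integrable (integrableD mD ia ib).
by move=> x _; exact: ler_unit_dot_sqrt.
Qed.

End DotIntegral.

Lemma sr_length_unit_speed (R : realType) (th : R -> R) (t : R) : 0 <= t ->
  sr_length t (fun s => cos (th s)) (fun s => sin (th s)) = t.
Proof.
move=> t0; rewrite /sr_length (@eq_Rintegral _ _ _ _ _ (fun=> 1)); last first.
  by move=> s _; rewrite cos2Dsin2 sqrtr1.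
rewrite Rintegral_cst // mul1r /leb.
have := lebesgue_measure_itv `[0, t]; rewrite /= lte_fin => ->.
by case: ltP => [_ | t_le0] /=; [rewrite subr0 | apply/le_anti; rewrite t0 t_le0].
Qed.

Lemma px_in_coords (R : realType) : @px R \in coords R.
Proof. exact: mem_head. Qed.

Lemma py_in_coords (R : realType) : @py R \in coords R.
Proof. by rewrite !inE eqxx orbT. Qed.

Section StraightGeodesic.
Context {R : realType} {th0 c0 al be : R} {th cc : R -> R} {g : R -> pt R}.
Hypothesis Exp : is_Exp th0 c0 al be th cc g.
Hypothesis cc_rest : forall t, 0 <= t -> cc t = 0.

Lemma Exp_theta_const t : 0 <= t -> th t = th0.
Proof.
case: Exp => -[<- _ _] dth _ _ t0.
by apply: (deriv_eq0_constant 0 dth) => // x /ltW; exact: cc_rest.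
Qed.

Lemma Exp_planar_coords t : 0 <= t ->
  px (g t) = cos th0 * t /\ py (g t) = sin th0 * t.
Proof.
case: Exp => -[_ _ g0] _ _ dg t0.
have coord_linear (c : pt R -> R) (k : R) : c \in coords R -> c (origin R) = 0 ->
    (forall x, 0 < x -> c (field (g x) (cos (th x)) (sin (th x))) = k) ->
    c (g t) = k * t.
  move=> cin c_origin ck.
  by rewrite (deriv_const_linear k 0 (fun x => dg x c cin)) // g0 c_origin add0r subr0.
by split; apply: coord_linear; rewrite ?px_in_coords ?py_in_coords //= => x /ltW x0;
  rewrite Exp_theta_const.
Qed.

Lemma Exp_minimizing t : 0 < t -> minimizing th g t.
Proof.
move=> t_gt0 T v1 v2 h [T0 _ _ _ h_dyn] h0 hT.
have [[i1 h1] [i2 h2]] := (h_dyn _ (px_in_coords R), h_dyn _ (py_in_coords R)).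
have TT : T \in `[0, T] by rewrite in_itv /= T0 lexx.
have [gx gy] := Exp_planar_coords t (ltW t_gt0).
case: Exp => -[_ _ g0] _ _ _.
move: (h1 T TT) (h2 T TT); rewrite hT h0 g0 gx gy /= !add0r => I1 I2.
rewrite sr_length_unit_speed; last exact: ltW.
have := dot_Rintegral_le_sqrt (@leb R) v1 v2 (measurable_itv _) i1 i2 _ _
  (cos2Dsin2 th0).
by rewrite -I1 -I2 !mulrA -mulrDl -!expr2 cos2Dsin2 mul1r.
Qed.

End StraightGeodesic.

Lemma minimizing_locally_optimal (R : realType) (th : R -> R) (g : R -> pt R) t :
  minimizing th g t -> locally_optimal th g t.
Proof. by move=> gmin; exists 1 => // v1 v2 h adm h0 ht _; exact: gmin adm h0 ht. Qed.

Lemma ereal_sup_pos_pinfty (R : realType) (P : R -> Prop) :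
  (forall t, 0 < t -> P t) ->
  ereal_sup [set t%:E | t in [set t | 0 < t /\ P t]] = +oo%E.
Proof.
move=> Ppos; apply: hasNub_ereal_sup; last by exists 1; split => //; apply: Ppos.
move=> [M ubM].
have M1_gt0 : 0 < `|M| + 1 by rewrite ltr_pwDr.
by have := ubM _ (conj M1_gt0 (Ppos _ M1_gt0)); have := ler_norm M; lra.
Qed.

Lemma Exp_rest_C457 {R : realType} {th0 c0 al be : R} {th cc : R -> R}
    {g : R -> pt R} :
  in_C4 th0 c0 al be \/ in_C5 th0 c0 al be \/ in_C7 th0 c0 al be ->
  is_Exp th0 c0 al be th cc g -> forall t, 0 <= t -> cc t = 0.
Proof.
move=> HC [[th00 cc00 _] dth dcc _].
case: HC => [[al_gt0 E0] | [[_ [E0 S1pi]] | [al0 c00]]].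
- by apply: (pendulum_C4_rest dth dcc (ltW al_gt0)); rewrite th00 cc00.
- by apply: (pendulum_C5_rest dth dcc); rewrite ?th00 ?cc00 ?eq_S1_pi_cos.
- by apply: (pendulum_C7_rest dcc al0); rewrite cc00.
Qed.

Theorem theorem6p1 (R : realType) (th0 c0 al be : R)
    (th cc : R -> R) (g : R -> pt R)
    (t1_MAX : R -> R -> R -> R -> \bar R) :
  (forall a b d e, in_C3 a b d e \/ in_C4 a b d e \/ in_C5 a b d e \/ in_C7 a b d e ->
     t1_MAX a b d e = +oo%E) ->
  0 <= al ->
  in_C4 th0 c0 al be \/ in_C5 th0 c0 al be \/ in_C7 th0 c0 al be ->
  is_Exp th0 c0 al be th cc g ->
  [/\ t_cut th g = +oo%E, t1_conj th g = +oo%E & t1_MAX th0 c0 al be = +oo%E].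
Proof.
move=> MAX_inf _ HC Exp.
have gmin := Exp_minimizing Exp (Exp_rest_C457 HC Exp).
split; first exact: ereal_sup_pos_pinfty.
- by apply: ereal_sup_pos_pinfty => t /gmin /minimizing_locally_optimal.
- by apply: MAX_inf; right.
Qed.
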